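(* Let $\mathcal A=(A,\le,\mathrm{app},\to,\mathsf k,\mathsf s,\Phi)$ be a full adjunction implicative ordered combinatory algebra, let $\mathcal K_{\mathcal A\bullet}$ be the abstract Krivine structure with $\Lambda=\Pi=A$, $s\perp\pi\iff s\le\pi$, $\mathrm{app}(s,t)=st$, $\mathrm{push}(s,\pi)=s\to\pi$, $\mathsf K=\mathsf k$, $\mathsf S=\mathsf s$, $\mathrm{QP}=\Phi$, and let $\mathcal A_{\mathcal K_{\mathcal A\bullet}\bullet}$ be the full adjunction implicative ordered combinatory algebra associated to $\mathcal K_{\mathcal A\bullet}$. Then the indexed preorders (triposes) $\mathbf P(\mathcal A)$ and $\mathbf P(\mathcal A_{\mathcal K_{\mathcal A\bullet}\bullet})$ are equivalent.
   Context: A full adjunction implicative ordered combinatory algebra is an inf-complete poset $(A,\le)$ with application $ab$ monotone in both arguments (associating to the left), implication $a\to b$ antimonotone in the first and monotone in the second argument, elements $\mathsf k,\mathsf s$ with $\mathsf k ab\le a$, $\mathsf s abc\le ac(bc)$, such that $a\le b\to c\iff ab\le c$, and a subset $\Phi$ closed under application containing $\mathsf s,\mathsf k$. For such $\mathcal A$, $\mathbf P(\mathcal A)$ is the functor $\mathbf{Set}^{op}\to\mathbf{Ord}$, $I\mapsto(A^I,\vdash)$ with $\varphi\vdash\psi$ iff $\exists r\in\Phi\ \forall i\in I,\ r\varphi(i)\le\psi(i)$, and $f\mapsto(\varphi\mapsto\varphi\circ f)$. Given an abstract Krivine structure $\mathcal K$ (sets $\Lambda,\Pi$, relation $\perp$,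 push $t\cdot\pi$, application, $\mathrm{QP}$, $\mathsf K,\mathsf S$), $\mathcal A_{\mathcal K\bullet}$ has carrier $\mathcal P_\bullet(\Pi)=\{P\subseteq\Pi:\widehat P=P\}$ (where ${}^\perp P=\{t:\forall\pi\in P,t\perp\pi\}$, $L^\perp=\{\pi:\forall t\in L,t\perp\pi\}$, $\overline P=({}^\perp P)^\perp$, $\widehat P=\bigcup_{\pi\in P}\overline{\{\pi\}}$) ordered by $\supseteq$, application $P\circ_\bullet Q=\{\pi:t\cdot\pi'\in P\ \forall t\in{}^\perp Q,\ \pi'\in\overline{\{\pi\}}\}$, implication $P\to_\bullet Q=\widehat{\{t\cdot\pi:t\in{}^\perp P,\pi\in Q\}}$, combinators $\mathsf k_\bullet=\{\mathsf E\mathsf K\}^\perp$, $\mathsf s_\bullet=\{\mathsf E((\mathsf B\mathsf E)\mathsf S)\}^\perp$ with $\mathsf E=\mathsf S(\mathsf K(\mathsf S\mathsf K\mathsf K))$, $\mathsf B=\mathsf S(\mathsf K\mathsf S)\mathsf K$, and filter $\{P\in\mathcal P_\bullet(\Pi):\exists t\in\mathrm{QP},\ t\perp P\}$. Indexed preorders $\mathbf C,\mathbf D$ are equivalent if there are indexed monotone maps $\sigma:\mathbf C\to\mathbf D$, $\tau:\mathbf D\to\mathbf C$ (families of monotone maps commuting with reindexing up to isomorphism) with $\tau\sigma\cong\mathrm{id}$ and $\sigma\tau\cong\mathrm{id}$ pointwise. *)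

Record FAIOCA := {
  car : Type;
  le : car -> car -> Prop;
  le_refl : forall a, le a a;
  le_trans : forall a b c, le a b -> le b c -> le a c;
  le_antisym : forall a b, le a b -> le b a -> a = b;
  inf_complete : forall S : car -> Prop, exists m,
      (forall x, S x -> le m x) /\ (forall y, (forall x, S x -> le y x) -> le y m);
  app : car -> car -> car;
  app_mono : forall a a' b b', le a a' -> le b b' -> le (app a b) (app a' b');
  imp : car -> car -> car;
  imp_mono : forall a a' b b', le a' a -> le b b' -> le (imp a b) (imp a' b');
  kc : car;
  sc : car;
  k_ax : forall a b, le (app (app kc a) b) a;
  s_ax : forall a b c, le (app (app (app sc a) b) c) (app (app a c) (app b c));
  adj : forall a b c, le a (imp b c) <-> le (app a b) c;
  Phi : car -> Prop;
  Phi_app : forall a b, Phi a -> Phi b -> Phi (app a b);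
  Phi_k : Phi kc;
  Phi_s : Phi sc
}.

(** The data needed to build the indexed preorder P(-): carrier, order,
    application and filter. *)
Record OCAdata := {
  dcar : Type;
  dle : dcar -> dcar -> Prop;
  dapp : dcar -> dcar -> dcar;
  dPhi : dcar -> Prop
}.

Definition data_of (A : FAIOCA) : OCAdata :=
  {| dcar := car A; dle := le A; dapp := app A; dPhi := Phi A |}.

Definition entails (D : OCAdata) (I : Type) (phi psi : I -> dcar D) : Prop :=
  exists r, dPhi D r /\ forall i, dle D (dapp D r (phi i)) (psi i).

Definition iso (D : OCAdata) (I : Type) (phi psi : I -> dcar D) : Prop :=
  entails D I phi psi /\ entails D I psi phi.

Definition indexed_monotone (C D : OCAdata)
  (sigma : forall I : Type, (I -> dcar C) -> (I -> dcar D)) : Prop :=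
  (forall (I : Type) (phi psi : I -> dcar C),
      entails C I phi psi -> entails D I (sigma I phi) (sigma I psi)) /\
  (forall (I J : Type) (f : J -> I) (phi : I -> dcar C),
      iso D J (sigma J (fun j => phi (f j))) (fun j => sigma I phi (f j))).

Definition indexed_equivalent (C D : OCAdata) : Prop :=
  exists (sigma : forall I : Type, (I -> dcar C) -> (I -> dcar D))
         (tau : forall I : Type, (I -> dcar D) -> (I -> dcar C)),
    indexed_monotone C D sigma /\ indexed_monotone D C tau /\
    (forall (I : Type) (phi : I -> dcar C), iso C I (tau I (sigma I phi)) phi) /\
    (forall (I : Type) (psi : I -> dcar D), iso D I (sigma I (tau I psi)) psi).

Record AKS := {
  Lam : Type;
  Pi : Type;
  perp : Lam -> Pi -> Prop;
  push : Lam -> Pi -> Pi;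
  kapp : Lam -> Lam -> Lam;
  QP : Lam -> Prop;
  KK : Lam;
  SS : Lam
}.

Section KrivineToOCA.
Variable K : AKS.

Definition orthL (P : Pi K -> Prop) : Lam K -> Prop :=
  fun t => forall p, P p -> perp K t p.
Definition orthR (L : Lam K -> Prop) : Pi K -> Prop :=
  fun p => forall t, L t -> perp K t p.
Definition bar (P : Pi K -> Prop) : Pi K -> Prop := orthR (orthL P).
Definition sing (p : Pi K) : Pi K -> Prop := fun q => q = p.
Definition hat (P : Pi K -> Prop) : Pi K -> Prop :=
  fun p => exists p0, P p0 /\ bar (sing p0) p.

Definition closed (P : Pi K -> Prop) : Prop := forall p, hat P p <-> P p.

Definition Pbul : Type := { P : Pi K -> Prop | closed P }.

Definition Pbul_le (P Q : Pbul) : Prop := forall p, proj1_sig Q p -> proj1_sig P p.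

Definition app_raw (P Q : Pi K -> Prop) : Pi K -> Prop :=
  fun p => forall t p', orthL Q t -> bar (sing p) p' -> P (push K t p').

Lemma bar_sing_trans (p q r : Pi K) :
  bar (sing p) q -> bar (sing q) r -> bar (sing p) r.
Proof.
  intros H1 H2 t Ht. apply H2. intros x ->. apply H1. exact Ht.
Qed.

Lemma app_raw_closed (P Q : Pi K -> Prop) : closed (app_raw P Q).
Proof.
  intro p; split.
  - intros [p0 [H0 Hb]] t p' Ht Hp'. apply H0; [exact Ht|].
    exact (bar_sing_trans _ _ _ Hb Hp').
  - intro H. exists p. split; [exact H|]. intros t Ht. apply Ht. reflexivity.
Qed.

Definition Pbul_app (P Q : Pbul) : Pbul :=
  exist _ (app_raw (proj1_sig P) (proj1_sig Q)) (app_raw_closed _ _).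

Definition Pbul_filter (P : Pbul) : Prop :=
  exists t, QP K t /\ orthL (proj1_sig P) t.

Definition A_Kbul : OCAdata :=
  {| dcar := Pbul; dle := Pbul_le; dapp := Pbul_app; dPhi := Pbul_filter |}.

End KrivineToOCA.

Definition K_of (A : FAIOCA) : AKS :=
  {| Lam := car A; Pi := car A; perp := le A; push := imp A; kapp := app A;
     QP := Phi A; KK := kc A; SS := sc A |}.

From Stdlib Require Import ClassicalEpsilon FunctionalExtensionality.

(* With s ⊥ π meaning s ≤ π, the closure of a singleton {p} is the up-set of p, so the
   closed sets of stacks are exactly the up-sets of A and a term realizes a closed set P
   iff it lies below inf P.  Hence P ↦ inf P turns entailment in A_{K_{A•}•} into
   entailment in A, the realizer r of the former giving the realizer of the latter and
   conversely the up-set of r.  Since inf (↑a) = a, the maps a ↦ ↑a and P ↦ inf P are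
   mutually inverse up to isomorphism, and both commute strictly with reindexing. *)

Section UpSetsAndInfima.
Variable A : FAIOCA.

Notation K := (K_of A).

Lemma bar_sing_iff_le (p q : car A) : bar K (sing K p) q <-> le A p q.
Proof.
  split.
  - intro H. apply H. intros q' ->. apply le_refl.
  - intros Hpq t Ht. apply le_trans with p; [apply Ht; reflexivity | exact Hpq].
Qed.

Definition up_set (a : car A) : Pi K -> Prop := fun q => le A a q.

Lemma up_set_closed (a : car A) : closed K (up_set a).
Proof.
  intro p; split.
  - intros [p0 [Hap0 Hp0p]]. apply bar_sing_iff_le in Hp0p.
    exact (le_trans A _ _ _ Hap0 Hp0p).
  - intro Hap. exists p. split; [exact Hap | apply bar_sing_iff_le, le_refl].
Qed.

Definition up (a : car A) : Pbul K := exist _ (up_set a) (up_set_closed a).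

Definition inf (S : car A -> Prop) : car A :=
  proj1_sig (constructive_indefinite_description _ (inf_complete A S)).

Lemma inf_lb (S : car A -> Prop) (x : car A) : S x -> le A (inf S) x.
Proof.
  unfold inf. destruct constructive_indefinite_description as [m [Hlb Hglb]].
  exact (Hlb x).
Qed.

Lemma inf_glb (S : car A -> Prop) (y : car A) :
  (forall x, S x -> le A y x) -> le A y (inf S).
Proof.
  unfold inf. destruct constructive_indefinite_description as [m [Hlb Hglb]].
  exact (Hglb y).
Qed.

Lemma orthL_iff_le_inf (P : Pi K -> Prop) (t : car A) : orthL K P t <-> le A t (inf P).
Proof.
  split.
  - exact (inf_glb P t).
  - intros Ht p Hp. exact (le_trans A _ _ _ Ht (inf_lb P p Hp)).
Qed.

Lemma inf_up_set (a : car A) : inf (up_set a) = a.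
Proof.
  apply le_antisym.
  - apply inf_lb, le_refl.
  - apply inf_glb. intros x Hx. exact Hx.
Qed.

Definition icomb : car A := app A (app A (sc A) (kc A)) (kc A).

Lemma icomb_le (a : car A) : le A (app A icomb a) a.
Proof. eapply le_trans; [apply s_ax | apply k_ax]. Qed.

Lemma icomb_Phi : Phi A icomb.
Proof. apply Phi_app; [apply Phi_app|]; auto using Phi_s, Phi_k. Qed.

Lemma entails_refl (I : Type) (phi : I -> car A) : entails (data_of A) I phi phi.
Proof. exists icomb. split; [exact icomb_Phi | intro i; apply icomb_le]. Qed.

Definition up_fam (I : Type) (phi : I -> car A) : I -> Pbul K :=
  fun i => up (phi i).

Definition inf_fam (I : Type) (psi : I -> Pbul K) : I -> car A :=
  fun i => inf (proj1_sig (psi i)).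

Lemma inf_fam_up_fam (I : Type) (phi : I -> car A) : inf_fam I (up_fam I phi) = phi.
Proof. extensionality i. apply inf_up_set. Qed.

Lemma entails_Kbul_iff (I : Type) (phi psi : I -> Pbul K) :
  entails (A_Kbul K) I phi psi <-> entails (data_of A) I (inf_fam I phi) (inf_fam I psi).
Proof.
  split.
  - intros [R [[t [Ht HtR]] HR]]. exists t. split; [exact Ht|].
    intro i. apply inf_glb. intros p Hp. apply (adj A), HtR.
    apply (HR i p Hp).
    + apply orthL_iff_le_inf, le_refl.
    + apply bar_sing_iff_le, le_refl.
  - intros [r [Hr Hinf]]. exists (up r). split.
    + exists r. split; [exact Hr|]. intros p Hp. exact Hp.
    + intros i p Hp t p' Ht Hpp'. apply (adj A).
      apply orthL_iff_le_inf in Ht. apply bar_sing_iff_le in Hpp'.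
      apply le_trans with (app A r (inf (proj1_sig (phi i)))).
      { apply app_mono; [apply le_refl | exact Ht]. }
      apply le_trans with p; [|exact Hpp'].
      exact (le_trans A _ _ _ (Hinf i) (inf_lb _ p Hp)).
Qed.

Lemma entails_Kbul_refl (I : Type) (psi : I -> Pbul K) : entails (A_Kbul K) I psi psi.
Proof. apply entails_Kbul_iff, entails_refl. Qed.

End UpSetsAndInfima.

Theorem mainTheorem17 (A : FAIOCA) :
  indexed_equivalent (data_of A) (A_Kbul (K_of A)).
Proof.
  exists (up_fam A), (inf_fam A).
  split; [split | split; [split | split]].
  - intros I phi psi Hphipsi.
    apply entails_Kbul_iff. rewrite !inf_fam_up_fam. exact Hphipsi.
  - intros I J f phi. split; apply entails_Kbul_refl.
  - intros I phi psi. apply entails_Kbul_iff.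
  - intros I J f phi. split; apply entails_refl.
  - intros I phi. rewrite inf_fam_up_fam. split; apply entails_refl.
  - intros I psi.
    split; apply entails_Kbul_iff; rewrite inf_fam_up_fam; apply entails_refl.
Qed.
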